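(* Consider $\dot x(t)=A_{\sigma(t)}x(t)+B_{\sigma(t)}u(t)$ with $A_i\in\mathbb{R}^{n\times n}$, $B_i\in\mathbb{R}^{n\times m}$, $i=1,\dots,N$, and let $\bar T>0$. Assume there exist continuously differentiable $X_i:[0,\bar T]\to\mathbb{D}^n$ with $X_i(\tau)$ nonsingular for all $\tau$ and $X_i(\bar T)\in\mathbb{D}^n_{\succ0}$, continuous $U_i:[0,\bar T]\to\mathbb{R}^{m\times n}$ ($i=1,\dots,N$) and scalars $\varepsilon,\alpha>0$ such that for all $\tau\in[0,\bar T]$ and all $i$: $A_iX_i(\tau)+B_iU_i(\tau)+\alpha I_n\ge0$, $\big[A_iX_i(\bar T)+B_iU_i(\bar T)\big]\mathbf{1}_n<0$, $\big[-\dot X_i(\tau)+A_iX_i(\tau)+B_iU_i(\tau)\big]\mathbf{1}_n<0$, and for all $i\ne j$: $\big[X_j(\bar T)-X_i(0)+\varepsilon I_n\big]\mathbf{1}_n\le0$. Let $K_i(\tau)=U_i(\tau)X_i(\tau)^{-1}$ and apply $u(t_k+\tau)=K_{\sigma(t_k^+)}(\tau)x(t_k+\tau)$ for $\tau\in[0,\bar T)$ and $u(t_k+\tau)=K_{\sigma(t_k^+)}(\bar T)x(t_k+\tau)$ for $\tau\in[\bar T,t_{k+1}-t_k)$, where $\sigma(t_k^+)$ is the mode active on $(t_k,t_{k+1}]$. Then the closed-loop system is positive and asymptotically stable under minimum dwell-time $\bar T$.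
   Context: $\mathbb{D}^n$ denotes $n\times n$ diagonal matrices, $\mathbb{D}^n_{\succ0}$ those with positive diagonal. Matrix/vector inequalities are entrywise; $\mathbf{1}_n$ is the vector of ones. The switching signal $\sigma$ is piecewise constant, left-continuous, with strictly increasing unbounded switching instants $t_k$. Positivity means $x(t)\ge0$ for all $t$ whenever $x(0)\ge0$. Asymptotic stability under minimum dwell-time $\bar T$ means global asymptotic stability of the origin for every switching signal with $\bar T\le t_{k+1}-t_k<\infty$. *)

From Stdlib Require Import Reals Lra.
Open Scope R_scope.

(* Vectors in R^n are functions nat -> R (only indices < n matter);
   n x m matrices are functions nat -> nat -> R.
   Families indexed by the mode i carry the mode as first argument. *)

Fixpoint rsum (n : nat) (f : nat -> R) : R :=
  match n with O => 0 | S k => rsum k f + f k end.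

Definition cont_on (a b : R) (f : R -> R) : Prop :=
  forall x, a <= x <= b -> forall e, 0 < e -> exists d, 0 < d /\
    forall y, a <= y <= b -> Rabs (y - x) < d -> Rabs (f y - f x) < e.

Definition cont_from0 (f : R -> R) : Prop :=
  forall x, 0 <= x -> forall e, 0 < e -> exists d, 0 < d /\
    forall y, 0 <= y -> Rabs (y - x) < d -> Rabs (f y - f x) < e.

(* X i tau : diagonal of X_i(tau) (element of D^n);  U i tau : m x n matrix.
   K_i(tau) = U_i(tau) X_i(tau)^{-1}, entry (l,c) = U_i(tau)_{lc} / X_i(tau)_c *)
Definition Kgain (U : nat -> R -> nat -> nat -> R) (X : nat -> R -> nat -> R)
  (i : nat) (tau : R) (l c : nat) : R := U i tau l c / X i tau c.

Definition cl_entry (m : nat) (A B : nat -> nat -> nat -> R)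
  (U : nat -> R -> nat -> nat -> R) (X : nat -> R -> nat -> R)
  (i : nat) (tau : R) (r c : nat) : R :=
  A i r c + rsum m (fun l => B i r l * Kgain U X i tau l c).

(* Switching signal sigma with modes in {0,..,N-1}, given by its switching
   instants t k (t 0 = 0 the initial time) and md k = sigma(t_k^+), the mode
   active on (t_k, t_{k+1}] (sigma left-continuous, piecewise constant).
   Switching instants are genuine switches, strictly increasing, unbounded,
   and respect the minimum dwell-time Tbar. *)
Definition dwell_switching (N : nat) (Tbar : R) (t : nat -> R) (md : nat -> nat)
  : Prop :=
  t O = 0 /\
  (forall k, (md k < N)%nat) /\
  (forall k, md (S k) <> md k) /\
  (forall k, t k < t (S k)) /\
  (forall M, exists k, M < t k) /\
  (forall k, Tbar <= t (S k) - t k).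

Definition cl_solution (n m : nat) (A B : nat -> nat -> nat -> R)
  (U : nat -> R -> nat -> nat -> R) (X : nat -> R -> nat -> R) (Tbar : R)
  (t : nat -> R) (md : nat -> nat) (x : R -> nat -> R) : Prop :=
  (forall r, (r < n)%nat -> cont_from0 (fun s => x s r)) /\
  (forall k s, t k < s < t (S k) -> forall r, (r < n)%nat ->
     derivable_pt_lim (fun s' => x s' r) s
       (rsum n (fun c => cl_entry m A B U X (md k) (Rmin (s - t k) Tbar) r c
                          * x s c))).

Definition vnorm (n : nat) (v : nat -> R) : R := rsum n (fun r => Rabs (v r)).

Definition cl_positive n m A B U X Tbar t md : Prop :=
  forall x, cl_solution n m A B U X Tbar t md x ->
    (forall r, (r < n)%nat -> 0 <= x 0 r) ->
    forall s, 0 <= s -> forall r, (r < n)%nat -> 0 <= x s r.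

Definition cl_GAS n m A B U X Tbar t md : Prop :=
  (forall e, 0 < e -> exists d, 0 < d /\
     forall x, cl_solution n m A B U X Tbar t md x ->
       vnorm n (x 0) < d -> forall s, 0 <= s -> vnorm n (x s) < e) /\
  (forall x, cl_solution n m A B U X Tbar t md x ->
     forall e, 0 < e -> exists T0, forall s, T0 <= s -> vnorm n (x s) < e).

From Stdlib Require Import Reals Lra Lia Classical.
Open Scope R_scope.

(* On each dwell interval the closed loop is Metzler, and the reference
   [X_i(min(tau, Tbar)) 1] is a strict supersolution of it (by the two row-sum
   conditions); a comparison principle therefore keeps [-x] and [|x|] below
   multiples of the reference.  At a switch from [i] to [j], the condition
   [X_j(Tbar) <= X_i(0) - eps] lets the multiple shrink by the factor
   [1 - eps / max X], which yields positivity and geometric decay. *)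

Lemma rsum_ext n f g : (forall r, (r < n)%nat -> f r = g r) -> rsum n f = rsum n g.
Proof.
  induction n as [|n IH]; simpl; intros H; [reflexivity|].
  rewrite IH by (intros; apply H; lia). rewrite (H n) by lia. reflexivity.
Qed.

Lemma rsum_le n f g : (forall r, (r < n)%nat -> f r <= g r) -> rsum n f <= rsum n g.
Proof.
  induction n as [|n IH]; simpl; intros H; [lra|].
  assert (rsum n f <= rsum n g) by (apply IH; intros; apply H; lia).
  specialize (H n ltac:(lia)). lra.
Qed.

Lemma rsum_plus n f g : rsum n (fun r => f r + g r) = rsum n f + rsum n g.
Proof. induction n as [|n IH]; simpl; [lra|]. rewrite IH. lra. Qed.

Lemma rsum_mulr n f a : rsum n f * a = rsum n (fun r => f r * a).
Proof. induction n as [|n IH]; simpl; [lra|]. rewrite <- IH. lra. Qed.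

Lemma rsum_delta n r v : (r < n)%nat -> rsum n (fun c => if Nat.eqb r c then v else 0) = v.
Proof.
  induction n as [|n IH]; simpl; intros Hr; [lia|].
  destruct (Nat.eqb_spec r n) as [->|Hne]; [|rewrite IH by lia; lra].
  assert (Hzero : forall k, (k <= n)%nat -> rsum k (fun c => if Nat.eqb n c then v else 0) = 0).
  { induction k as [|k IHk]; simpl; intros Hk; [reflexivity|].
    destruct (Nat.eqb_spec n k); [lia|]. rewrite IHk by lia. lra. }
  rewrite Hzero by lia. lra.
Qed.

Lemma vnorm_ge0 n v : 0 <= vnorm n v.
Proof. unfold vnorm. induction n; simpl; [lra|]. pose proof (Rabs_pos (v n)). lra. Qed.

Lemma Rabs_le_vnorm n v r : (r < n)%nat -> Rabs (v r) <= vnorm n v.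
Proof.
  induction n as [|n IH]; intros Hr; [lia|].
  pose proof (vnorm_ge0 n v). pose proof (Rabs_pos (v n)).
  unfold vnorm in *; simpl.
  destruct (Nat.eq_dec r n) as [->|]; [lra|]. specialize (IH ltac:(lia)). lra.
Qed.

Lemma vnorm_le n v c : (forall r, (r < n)%nat -> Rabs (v r) <= c) -> vnorm n v <= INR n * c.
Proof.
  unfold vnorm. induction n as [|n IH]; intros H; simpl rsum; [simpl; lra|].
  rewrite S_INR. specialize (IH ltac:(intros; apply H; lia)). specialize (H n ltac:(lia)). lra.
Qed.

Lemma common_delta n x0 (P : R -> Prop) (Q : nat -> R -> Prop) :
  (forall r, (r < n)%nat -> exists d, 0 < d /\ forall u, P u -> Rabs (u - x0) < d -> Q r u) ->
  exists d, 0 < d /\ forall u, P u -> Rabs (u - x0) < d -> forall r, (r < n)%nat -> Q r u.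
Proof.
  induction n as [|n IH]; intros H.
  - exists 1. split; [lra|]. intros; lia.
  - destruct IH as [d1 [Hd1 H1]]; [intros; apply H; lia|].
    destruct (H n ltac:(lia)) as [d2 [Hd2 H2]].
    exists (Rmin d1 d2). split; [apply Rmin_glb_lt; auto|].
    intros u Pu Hu r Hr. pose proof (Rmin_l d1 d2). pose proof (Rmin_r d1 d2).
    destruct (Nat.eq_dec r n) as [->|]; [apply H2; auto; lra|].
    apply H1; auto; [lra|lia].
Qed.

Lemma common_ub n (P : nat -> R -> Prop) :
  (forall r, (r < n)%nat -> exists c, P r c) ->
  (forall r c c', P r c -> c <= c' -> P r c') ->
  exists c, forall r, (r < n)%nat -> P r c.
Proof.
  intros H Hmono. induction n as [|n IH].
  - exists 0. intros; lia.
  - destruct IH as [c1 H1]; [intros; apply H; lia|].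
    destruct (H n ltac:(lia)) as [c2 H2].
    exists (Rmax c1 c2). intros r Hr. destruct (Nat.eq_dec r n) as [->|].
    + eapply Hmono; [exact H2|apply Rmax_r].
    + eapply Hmono; [apply H1; lia|apply Rmax_l].
Qed.

Lemma real_induction (a b : R) (P : R -> Prop) :
  P a ->
  (forall s, a < s <= b -> (forall u, a <= u < s -> P u) -> P s) ->
  (forall s, a <= s < b -> P s -> exists d, 0 < d /\ forall u, s < u < s + d -> P u) ->
  forall s, a <= s <= b -> P s.
Proof.
  intros Ha Hclose Hopen.
  set (E := fun s => a <= s <= b /\ forall u, a <= u <= s -> P u).
  destruct (Rle_dec a b) as [Hab|Hab]; [|intros s Hs; apply Rnot_le_lt in Hab; lra].
  assert (Ea : E a) by (split; [lra|intros u Hu; replace u with a by lra; exact Ha]).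
  destruct (completeness E) as [S [HSub HSleast]].
  { exists b. intros s [Hs _]. lra. }
  { exists a. exact Ea. }
  assert (HaS : a <= S) by (apply HSub; exact Ea).
  assert (HSb : S <= b) by (apply HSleast; intros s [Hs _]; lra).
  assert (below : forall u, a <= u < S -> P u).
  { intros u Hu. apply NNPP; intros Hn.
    assert (S <= u); [|lra]. apply HSleast. intros e [_ He].
    destruct (Rle_dec e u); [assumption|]. exfalso. apply Hn, He. lra. }
  assert (atS : P S).
  { destruct (Req_dec S a) as [->|]; [exact Ha|]. apply Hclose; [lra|exact below]. }
  assert (HSeq : S = b).
  { destruct (Req_dec S b) as [|Hne]; [assumption|]. exfalso.
    destruct (Hopen S ltac:(lra) atS) as [d [Hd above]].
    pose proof (Rmin_l (S + d / 2) b). pose proof (Rmin_r (S + d / 2) b).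
    set (e := Rmin (S + d / 2) b) in *.
    assert (HSe : S < e) by (apply Rmin_glb_lt; lra).
    assert (E e); [|pose proof (HSub e ltac:(assumption)); lra].
    split; [lra|]. intros u Hu.
    destruct (Rlt_le_dec u S); [apply below; lra|].
    destruct (Req_dec u S) as [->|]; [exact atS|apply above; lra]. }
  intros s Hs. destruct (Rlt_le_dec s S); [apply below; lra|].
  replace s with S by lra. exact atS.
Qed.

Lemma pos_left_of_neg_deriv (g : R -> R) s l :
  derivable_pt_lim g s l -> l < 0 -> g s = 0 ->
  exists d, 0 < d /\ forall u, s - d < u < s -> 0 < g u.
Proof.
  intros Hg Hl Hs.
  destruct (Hg (- l / 2) ltac:(lra)) as [d Hd].
  exists d. split; [apply cond_pos|]. intros u Hu.
  assert (Hh : u - s <> 0) by lra.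
  specialize (Hd (u - s) Hh ltac:(rewrite Rabs_left; lra)).
  replace (s + (u - s)) with u in Hd by ring. rewrite Hs in Hd.
  apply Rabs_def2 in Hd. destruct Hd as [Hq _].
  assert (E : g u = (g u - 0) / (u - s) * (u - s)) by (field; assumption).
  rewrite E. nra.
Qed.

Lemma cont_on_scal_minus_lip a b (f g h : R -> R) c :
  (forall v w, Rabs (h v - h w) <= Rabs (v - w)) ->
  cont_on a b f -> cont_on a b g -> cont_on a b (fun u => c * g u - h (f u)).
Proof.
  intros Hh Hf Hg s Hs e He.
  assert (Hc : 0 < e / (2 * (Rabs c + 1))).
  { apply Rdiv_lt_0_compat; [lra|]. pose proof (Rabs_pos c); lra. }
  destruct (Hf s Hs (e / 2) ltac:(lra)) as [d1 [Hd1 H1]].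
  destruct (Hg s Hs _ Hc) as [d2 [Hd2 H2]].
  exists (Rmin d1 d2). split; [apply Rmin_glb_lt; auto|].
  intros y Hy Hyd. pose proof (Rmin_l d1 d2). pose proof (Rmin_r d1 d2).
  specialize (H1 y Hy ltac:(lra)). specialize (H2 y Hy ltac:(lra)).
  pose proof (Hh (f y) (f s)).
  assert (Hcg : Rabs (c * (g y - g s)) <= e / 2).
  { rewrite Rabs_mult. pose proof (Rabs_pos c).
    apply Rle_trans with (Rabs c * (e / (2 * (Rabs c + 1)))); [apply Rmult_le_compat_l; lra|].
    apply Rmult_le_reg_r with (2 * (Rabs c + 1)); [lra|].
    field_simplify; [nra|lra]. }
  replace (c * g y - h (f y) - (c * g s - h (f s)))
    with (c * (g y - g s) - (h (f y) - h (f s))) by ring.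
  eapply Rle_lt_trans; [apply Rabs_triang|]. rewrite Rabs_Ropp. lra.
Qed.

Lemma cont_on_pos_nbhs a b F s : cont_on a b F -> a <= s <= b -> 0 < F s ->
  exists d, 0 < d /\ forall u, a <= u <= b -> Rabs (u - s) < d -> 0 < F u.
Proof.
  intros HF Hs Hp. destruct (HF s Hs (F s) Hp) as [d [Hd H]].
  exists d. split; [exact Hd|]. intros u Hu Hud.
  specialize (H u Hu Hud). apply Rabs_def2 in H. lra.
Qed.

Lemma cont_on_left_limit_ge0 a b F s : cont_on a b F -> a < s <= b ->
  (forall u, a <= u < s -> 0 < F u) -> 0 <= F s.
Proof.
  intros HF Hs H. destruct (Rle_dec 0 (F s)) as [|Hn]; [assumption|].
  apply Rnot_le_lt in Hn.
  destruct (HF s ltac:(lra) (- F s) ltac:(lra)) as [d [Hd Hc]].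
  pose proof (Rmax_l a (s - d / 2)). pose proof (Rmax_r a (s - d / 2)).
  set (u := Rmax a (s - d / 2)) in *.
  assert (Hus : u < s) by (apply Rmax_lub_lt; lra).
  specialize (Hc u ltac:(lra) ltac:(rewrite Rabs_left; lra)).
  specialize (H u ltac:(lra)). apply Rabs_def2 in Hc. lra.
Qed.

(* A gauge is 1-Lipschitz and has a supporting slope at every point; the slope
   is what lets a bound on [h] pass through a nonnegative (Metzler) combination. *)
Definition gauge (h : R -> R) : Prop :=
  (forall v w, Rabs (h v - h w) <= Rabs (v - w)) /\
  (forall v, exists sg, sg * v = h v /\ forall w, sg * w <= h w).

Lemma gauge_Ropp : gauge Ropp.
Proof.
  split.
  - intros v w. replace (- v - - w) with (- (v - w)) by ring. rewrite Rabs_Ropp. lra.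
  - intros v. exists (-1). split; intros; lra.
Qed.

Lemma gauge_Rabs : gauge Rabs.
Proof.
  split; [exact Rabs_triang_inv2|].
  intros v. destruct (Rle_dec 0 v).
  - exists 1. split; [rewrite Rabs_right; lra|]. intros w. pose proof (Rle_abs w). lra.
  - exists (-1). split; [rewrite Rabs_left; lra|].
    intros w. pose proof (Rle_abs (- w)) as H. rewrite Rabs_Ropp in H. lra.
Qed.

Section Comparison.

Variables (n : nat) (a b : R) (x Z : R -> nat -> R) (M : R -> nat -> nat -> R) (h : R -> R).

Hypothesis Hab : a < b.
Hypothesis Z_pos : forall s r, a <= s <= b -> (r < n)%nat -> 0 < Z s r.
Hypothesis x_cont : forall r, (r < n)%nat -> cont_on a b (fun s => x s r).
Hypothesis Z_cont : forall r, (r < n)%nat -> cont_on a b (fun s => Z s r).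
Hypothesis x_ode : forall s r, a < s < b -> (r < n)%nat ->
  derivable_pt_lim (fun u => x u r) s (rsum n (fun c => M s r c * x s c)).
Hypothesis M_metzler : forall s r c, a < s < b -> (r < n)%nat -> (c < n)%nat ->
  r <> c -> 0 <= M s r c.
Hypothesis Z_strict_supersolution : forall s r, a < s < b -> (r < n)%nat ->
  exists Zl dz d, 0 < d /\ (forall u, s - d < u <= s -> Zl u = Z u r) /\
    derivable_pt_lim Zl s dz /\ rsum n (fun c => M s r c * Z s c) - dz < 0.
Hypothesis h_gauge : gauge h.

Let strictly_below (c s : R) : Prop := forall r, (r < n)%nat -> h (x s r) < c * Z s r.

Lemma gap_cont c r : (r < n)%nat -> cont_on a b (fun u => c * Z u r - h (x u r)).
Proof. intros Hr. apply cont_on_scal_minus_lip; auto. apply h_gauge. Qed.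

Lemma strictly_below_closes c s : 0 < c -> a < s < b ->
  (forall u, a <= u < s -> strictly_below c u) -> strictly_below c s.
Proof.
  intros Hc Hs Hbelow r Hr.
  destruct (Rlt_le_dec (h (x s r)) (c * Z s r)) as [|Hge]; [assumption|exfalso].
  assert (Hle : forall q, (q < n)%nat -> h (x s q) <= c * Z s q).
  { intros q Hq.
    enough (0 <= c * Z s q - h (x s q)) by lra.
    apply (cont_on_left_limit_ge0 a b (fun u => c * Z u q - h (x u q)));
      [apply gap_cont; assumption|lra|].
    intros u Hu. specialize (Hbelow u Hu q Hq). lra. }
  destruct (proj2 h_gauge (x s r)) as [sg [Hsg Hsg_min]].
  destruct (Z_strict_supersolution s r Hs Hr) as (Zl & dz & d1 & Hd1 & HZl & HdZl & Hsuper).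
  (* At the contact point the supporting slope of [h] and the Metzler structure
     bound the growth rate of [h (x _ r)] by that of [c Z _ r]. *)
  assert (Hslope : sg * rsum n (fun q => M s r q * x s q) <= c * rsum n (fun q => M s r q * Z s q)).
  { rewrite !(Rmult_comm sg), !(Rmult_comm c), !rsum_mulr. apply rsum_le. intros q Hq.
    destruct (Nat.eq_dec r q) as [<-|Hne].
    - assert (Hcontact : h (x s r) = c * Z s r) by (specialize (Hle r Hr); lra).
      rewrite Rmult_assoc, (Rmult_comm (x s r)), Hsg, Hcontact. right; ring.
    - specialize (M_metzler s r q Hs Hr Hq Hne). specialize (Hsg_min (x s q)).
      specialize (Hle q Hq). nra. }
  assert (Hg : derivable_pt_lim (fun u => sg * x u r - c * Zl u) s
                 (sg * rsum n (fun q => M s r q * x s q) - c * dz)).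
  { apply derivable_pt_lim_minus; apply derivable_pt_lim_scal; [apply x_ode|]; assumption. }
  destruct (pos_left_of_neg_deriv _ _ _ Hg) as [d2 [Hd2 Hleft]].
  { nra. }
  { rewrite HZl by lra. specialize (Hle r Hr). lra. }
  pose proof (Rmin_l d1 d2). pose proof (Rmin_r d1 d2).
  assert (Hd : 0 < Rmin d1 d2) by (apply Rmin_glb_lt; assumption).
  pose proof (Rmax_l a (s - Rmin d1 d2 / 2)). pose proof (Rmax_r a (s - Rmin d1 d2 / 2)).
  set (u := Rmax a (s - Rmin d1 d2 / 2)) in *.
  assert (Hus : u < s) by (apply Rmax_lub_lt; lra).
  specialize (Hleft u ltac:(lra)). rewrite HZl in Hleft by lra.
  specialize (Hbelow u ltac:(lra) r Hr). specialize (Hsg_min (x u r)). lra.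
Qed.

Lemma strictly_below_opens c s : a <= s < b -> strictly_below c s ->
  exists d, 0 < d /\ forall u, s < u < s + d -> strictly_below c u.
Proof.
  intros Hs Hbelow.
  destruct (common_delta n s (fun u => a <= u <= b)
              (fun r u => 0 < c * Z u r - h (x u r))) as [d [Hd Hnear]].
  { intros r Hr. apply cont_on_pos_nbhs; [apply gap_cont; assumption|lra|].
    specialize (Hbelow r Hr). lra. }
  exists (Rmin d (b - s)). split; [apply Rmin_glb_lt; lra|].
  intros u Hu r Hr. pose proof (Rmin_l d (b - s)). pose proof (Rmin_r d (b - s)).
  specialize (Hnear u ltac:(lra) ltac:(rewrite Rabs_right; lra) r Hr). lra.
Qed.

Lemma strictly_below_propagates c : 0 < c -> strictly_below c a ->
  forall s, a <= s < b -> strictly_below c s.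
Proof.
  intros Hc Ha s Hs.
  apply (real_induction a s); [exact Ha| | |lra].
  - intros u Hu Hbelow. apply strictly_below_closes; [assumption|lra|assumption].
  - intros u Hu Hu_below. apply strictly_below_opens; [lra|assumption].
Qed.

Theorem comparison_principle c : 0 <= c ->
  (forall r, (r < n)%nat -> h (x a r) <= c * Z a r) ->
  forall s r, a <= s <= b -> (r < n)%nat -> h (x s r) <= c * Z s r.
Proof.
  intros Hc Ha s r Hs Hr.
  pose proof (Z_pos s r Hs Hr) as HZs.
  (* The strict propagation needs [0 < c] and a strict start, hence the margin [e]. *)
  apply Rle_plus_epsilon. intros e He.
  set (c' := c + e / Z s r).
  assert (Hc' : c < c') by (unfold c'; pose proof (Rdiv_lt_0_compat e _ He HZs); lra).
  assert (Ha' : strictly_below c' a).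
  { intros q Hq. specialize (Ha q Hq). pose proof (Z_pos a q ltac:(lra) Hq). nra. }
  assert (Hbound : h (x s r) <= c' * Z s r).
  { destruct (Rlt_le_dec s b) as [Hsb|Hsb].
    - left. apply strictly_below_propagates; [lra|assumption|lra|assumption].
    - replace s with b by lra.
      enough (0 <= c' * Z b r - h (x b r)) by lra.
      apply (cont_on_left_limit_ge0 a b (fun u => c' * Z u r - h (x u r)));
        [apply gap_cont; assumption|lra|].
      intros u Hu. pose proof (strictly_below_propagates c' ltac:(lra) Ha' u ltac:(lra) r Hr).
      lra. }
  replace (c * Z s r + e) with (c' * Z s r) by (unfold c'; field; lra). exact Hbound.
Qed.

End Comparison.

Lemma increasing_le (t : nat -> R) : (forall k, t k < t (S k)) ->
  forall i j, (i <= j)%nat -> t i <= t j.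
Proof. intros H i j Hij. induction Hij as [|j _ IH]; [lra|]. specialize (H j). lra. Qed.

Lemma switching_interval (t : nat -> R) :
  (forall k, t k < t (S k)) -> (forall M, exists k, M < t k) ->
  forall s K, t K <= s -> exists k, (K <= k)%nat /\ t k <= s <= t (S k).
Proof.
  intros Hinc Hunb s K HK. destruct (Hunb s) as [J HJ].
  induction J as [|J IH].
  - pose proof (increasing_le t Hinc 0 K ltac:(lia)). lra.
  - destruct (Rlt_le_dec s (t J)); [apply IH; assumption|].
    exists J. split; [|lra].
    destruct (Compare_dec.le_lt_dec K J); [assumption|].
    pose proof (increasing_le t Hinc (S J) K ltac:(lia)). lra.
Qed.

Lemma pos_of_nonvanishing (f : R -> R) a b :
  (forall u, a <= u <= b -> continuity_pt f u) -> (forall u, a <= u <= b -> f u <> 0) ->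
  0 < f b -> forall u, a <= u <= b -> 0 < f u.
Proof.
  intros Hcont Hnz Hb u Hu.
  destruct (Rlt_le_dec 0 (f u)) as [|Hle]; [assumption|exfalso].
  assert (Hneg : f u < 0) by (pose proof (Hnz u Hu); lra).
  destruct (Req_dec u b) as [->|Hne]; [lra|].
  destruct (Ranalysis5.IVT_interv f u b) as [z [Hz Hfz]]; try assumption; [|lra|].
  - intros v Hv. apply Hcont. lra.
  - apply (Hnz z); [lra|assumption].
Qed.

Lemma cont_on_clamp (f : R -> R) a b t0 T : 0 <= T -> t0 <= a ->
  (forall tau, 0 <= tau <= T -> continuity_pt f tau) ->
  cont_on a b (fun s => f (Rmin (s - t0) T)).
Proof.
  intros HT Ha Hf s Hs e He.
  assert (Hclamp : forall u, t0 <= u -> 0 <= Rmin (u - t0) T <= T).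
  { intros u Hu. split; [apply Rmin_glb; lra|apply Rmin_r]. }
  destruct (Hf _ (Hclamp s ltac:(lra)) e He) as [d [Hd Hnear]].
  exists d. split; [lra|]. intros y Hy Hyd.
  assert (Hlip : Rabs (Rmin (y - t0) T - Rmin (s - t0) T) <= Rabs (y - s)).
  { unfold Rmin; destruct (Rle_dec (y - t0) T); destruct (Rle_dec (s - t0) T);
    unfold Rabs; destruct (Rcase_abs _); destruct (Rcase_abs _); lra. }
  destruct (Req_dec (Rmin (y - t0) T) (Rmin (s - t0) T)) as [Heq|Hne].
  - rewrite Heq, Rminus_diag, Rabs_R0. exact He.
  - apply (Hnear (Rmin (y - t0) T)). split; [split; [exact I|auto]|]. simpl. unfold R_dist. lra.
Qed.

Lemma GAS_of_interval_decay n (sol : (R -> nat -> R) -> Prop) (t : nat -> R) rho P :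
  t O = 0 -> (forall k, t k < t (S k)) -> (forall M, exists k, M < t k) ->
  0 <= rho < 1 -> 0 <= P ->
  (forall x, sol x -> forall k s, t k <= s <= t (S k) ->
     vnorm n (x s) <= P * vnorm n (x 0) * rho ^ k) ->
  (forall e, 0 < e -> exists d, 0 < d /\
     forall x, sol x -> vnorm n (x 0) < d -> forall s, 0 <= s -> vnorm n (x s) < e) /\
  (forall x, sol x -> forall e, 0 < e -> exists T0, forall s, T0 <= s -> vnorm n (x s) < e).
Proof.
  intros Ht0 Hinc Hunb Hrho HP Hdecay.
  assert (Hrho_pow : forall k, 0 <= rho ^ k <= 1).
  { intros k. split; [apply pow_le; lra|]. rewrite <- (pow1 k). apply pow_incr. lra. }
  split.
  - intros e He. exists (e / (P + 1)). split; [apply Rdiv_lt_0_compat; lra|].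
    intros x Hx Hx0 s Hs.
    destruct (switching_interval t Hinc Hunb s 0 ltac:(lra)) as [k [_ Hk]].
    specialize (Hdecay x Hx k s Hk). specialize (Hrho_pow k).
    pose proof (vnorm_ge0 n (x 0)).
    assert (Hd : P * vnorm n (x 0) <= P * (e / (P + 1))) by (apply Rmult_le_compat_l; lra).
    assert (He' : P * (e / (P + 1)) < e).
    { apply Rmult_lt_reg_r with (P + 1); [lra|]. field_simplify; lra. }
    assert (P * vnorm n (x 0) * rho ^ k <= P * vnorm n (x 0)).
    { rewrite <- (Rmult_1_r (P * vnorm n (x 0))) at 2.
      apply Rmult_le_compat_l; [apply Rmult_le_pos|]; lra. }
    lra.
  - intros x Hx e He.
    set (Q := P * vnorm n (x 0)).
    assert (HQ : 0 <= Q) by (apply Rmult_le_pos; [assumption|apply vnorm_ge0]).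
    destruct (pow_lt_1_zero rho ltac:(rewrite Rabs_right; lra) (e / (Q + 1)))
      as [K HK]; [apply Rdiv_lt_0_compat; lra|].
    exists (t K). intros s Hs.
    destruct (switching_interval t Hinc Hunb s K Hs) as [k [HKk Hk]].
    specialize (HK k HKk). rewrite Rabs_right in HK by (apply Rle_ge, pow_le; lra).
    specialize (Hdecay x Hx k s Hk). fold Q in Hdecay.
    assert (Q * rho ^ k <= Q * (e / (Q + 1))) by (apply Rmult_le_compat_l; lra).
    assert (Q * (e / (Q + 1)) < e).
    { apply Rmult_lt_reg_r with (Q + 1); [lra|]. field_simplify; lra. }
    lra.
Qed.

Lemma cl_entry_mulX m A B U X i tau r c : X i tau c <> 0 ->
  cl_entry m A B U X i tau r c * X i tau c
  = A i r c * X i tau c + rsum m (fun l => B i r l * U i tau l c).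
Proof.
  intros H. unfold cl_entry, Kgain. rewrite Rmult_plus_distr_r, rsum_mulr. f_equal.
  apply rsum_ext. intros. field. exact H.
Qed.

Section ClosedLoop.

Variables (n m N : nat) (A B : nat -> nat -> nat -> R) (X dX : nat -> R -> nat -> R)
  (U : nat -> R -> nat -> nat -> R) (Tbar eps alpha : R) (t : nat -> R) (md : nat -> nat).

Hypothesis Tbar_pos : 0 < Tbar.
Hypothesis eps_pos : 0 < eps.
Hypothesis X_deriv : forall i r, (i < N)%nat -> (r < n)%nat -> forall tau, 0 <= tau <= Tbar ->
  derivable_pt_lim (fun s => X i s r) tau (dX i tau r).
Hypothesis X_nonsingular : forall i r, (i < N)%nat -> (r < n)%nat ->
  forall tau, 0 <= tau <= Tbar -> X i tau r <> 0.
Hypothesis X_Tbar_pos : forall i r, (i < N)%nat -> (r < n)%nat -> 0 < X i Tbar r.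
Hypothesis AXBU_metzler : forall i, (i < N)%nat -> forall tau, 0 <= tau <= Tbar ->
  forall r c, (r < n)%nat -> (c < n)%nat ->
    0 <= A i r c * X i tau c + rsum m (fun l => B i r l * U i tau l c)
         + (if Nat.eqb r c then alpha else 0).
Hypothesis AXBU_Tbar_neg : forall i r, (i < N)%nat -> (r < n)%nat ->
  rsum n (fun c => A i r c * X i Tbar c + rsum m (fun l => B i r l * U i Tbar l c)) < 0.
Hypothesis AXBU_dX_neg : forall i, (i < N)%nat -> forall tau, 0 <= tau <= Tbar ->
  forall r, (r < n)%nat ->
    rsum n (fun c => (if Nat.eqb r c then - dX i tau r else 0)
                     + A i r c * X i tau c + rsum m (fun l => B i r l * U i tau l c)) < 0.
Hypothesis X_switch : forall i j, (i < N)%nat -> (j < N)%nat -> i <> j ->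
  forall r, (r < n)%nat -> X j Tbar r - X i 0 r + eps <= 0.
Hypothesis switching : dwell_switching N Tbar t md.

Lemma switching_nonneg k : 0 <= t k.
Proof.
  destruct switching as (Ht0 & _ & _ & Hinc & _).
  rewrite <- Ht0. apply increasing_le; [assumption|lia].
Qed.

Lemma X_continuous i r : (i < N)%nat -> (r < n)%nat ->
  forall tau, 0 <= tau <= Tbar -> continuity_pt (fun s => X i s r) tau.
Proof.
  intros Hi Hr tau Htau. apply derivable_continuous_pt.
  exact (exist _ (dX i tau r) (X_deriv i r Hi Hr tau Htau)).
Qed.

Lemma X_pos i r : (i < N)%nat -> (r < n)%nat -> forall tau, 0 <= tau <= Tbar -> 0 < X i tau r.
Proof.
  intros Hi Hr. apply (pos_of_nonvanishing (fun s => X i s r) 0 Tbar).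
  - exact (X_continuous i r Hi Hr).
  - exact (X_nonsingular i r Hi Hr).
  - exact (X_Tbar_pos i r Hi Hr).
Qed.

Lemma X_start_ge_eps k r : (r < n)%nat -> eps <= X (md k) 0 r.
Proof.
  intros Hr. destruct switching as (_ & Hmd & Hnsw & _).
  pose proof (X_switch (md k) (md (S k)) (Hmd k) (Hmd (S k)) (not_eq_sym (Hnsw k)) r Hr).
  pose proof (X_Tbar_pos (md (S k)) r (Hmd (S k)) Hr). lra.
Qed.

Lemma X_bounded : exists Zm, eps <= Zm /\
  forall i r, (i < N)%nat -> (r < n)%nat -> forall tau, 0 <= tau <= Tbar -> X i tau r <= Zm.
Proof.
  destruct (common_ub N (fun i c => forall r, (r < n)%nat ->
              forall tau, 0 <= tau <= Tbar -> X i tau r <= c)) as [c Hc].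
  - intros i Hi.
    apply (common_ub n (fun r c => forall tau, 0 <= tau <= Tbar -> X i tau r <= c)).
    + intros r Hr.
      destruct (continuity_ab_maj (fun s => X i s r) 0 Tbar ltac:(lra)
                  (X_continuous i r Hi Hr)) as [tmax [Hmax _]].
      exists (X i tmax r). exact Hmax.
    + intros r c c' H Hc tau Htau. specialize (H tau Htau). lra.
  - intros i c c' H Hc r Hr tau Htau. specialize (H r Hr tau Htau). lra.
  - exists (Rmax c eps). split; [apply Rmax_r|].
    intros i r Hi Hr tau Htau. eapply Rle_trans; [apply Hc; assumption|apply Rmax_l].
Qed.

Let Xref k s r := X (md k) (Rmin (s - t k) Tbar) r.

Lemma clamp_range k s : t k <= s -> 0 <= Rmin (s - t k) Tbar <= Tbar.
Proof. intros Hs. split; [apply Rmin_glb; lra|apply Rmin_r]. Qed.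

Lemma cl_offdiag_nonneg k s r c : t k <= s -> (r < n)%nat -> (c < n)%nat -> r <> c ->
  0 <= cl_entry m A B U X (md k) (Rmin (s - t k) Tbar) r c.
Proof.
  intros Hs Hr Hc Hne. destruct switching as (_ & Hmd & _).
  pose proof (clamp_range k s Hs) as Htau.
  pose proof (AXBU_metzler (md k) (Hmd k) _ Htau r c Hr Hc) as Hm.
  destruct (Nat.eqb_spec r c); [contradiction|].
  rewrite <- cl_entry_mulX in Hm by (apply X_nonsingular; auto).
  pose proof (X_pos (md k) c (Hmd k) Hc _ Htau).
  destruct (Rlt_le_dec (cl_entry m A B U X (md k) (Rmin (s - t k) Tbar) r c) 0); nra.
Qed.

Lemma Xref_strict_supersolution k s r : t k < s < t (S k) -> (r < n)%nat ->
  exists Zl dz d, 0 < d /\ (forall u, s - d < u <= s -> Zl u = Xref k u r) /\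
    derivable_pt_lim Zl s dz /\
    rsum n (fun c => cl_entry m A B U X (md k) (Rmin (s - t k) Tbar) r c * Xref k s c) - dz < 0.
Proof.
  intros Hs Hr. destruct switching as (_ & Hmd & _).
  assert (Hrow : forall tau, 0 <= tau <= Tbar ->
    rsum n (fun c => cl_entry m A B U X (md k) tau r c * X (md k) tau c) =
    rsum n (fun c => A (md k) r c * X (md k) tau c
                     + rsum m (fun l => B (md k) r l * U (md k) tau l c))).
  { intros tau Htau. apply rsum_ext. intros c Hc. apply cl_entry_mulX, X_nonsingular; auto. }
  unfold Xref. destruct (Rle_dec (s - t k) Tbar) as [Hle|Hgt].
  - exists (fun u => X (md k) (u - t k) r), (dX (md k) (s - t k) r), (s - t k).
    split; [lra|]. split; [|split].
    + intros u Hu. rewrite Rmin_left by lra. reflexivity.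
    + assert (Hshift : derivable_pt_lim (fun u => u - t k) s 1).
      { replace 1 with (1 - 0) by ring.
        apply (derivable_pt_lim_minus id (fct_cte (t k)));
          [apply derivable_pt_lim_id|apply derivable_pt_lim_const]. }
      pose proof (derivable_pt_lim_comp _ (fun v => X (md k) v r) s _ _ Hshift
                    (X_deriv (md k) r (Hmd k) Hr (s - t k) ltac:(lra))) as Hcomp.
      rewrite Rmult_1_r in Hcomp. exact Hcomp.
    + rewrite Rmin_left, Hrow by lra.
      pose proof (AXBU_dX_neg (md k) (Hmd k) (s - t k) ltac:(lra) r Hr) as Hneg.
      rewrite !rsum_plus, rsum_delta in Hneg by assumption. rewrite rsum_plus. lra.
  - exists (fun _ => X (md k) Tbar r), 0, (s - t k - Tbar).
    split; [lra|]. split; [|split].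
    + intros u Hu. rewrite Rmin_right by lra. reflexivity.
    + apply derivable_pt_lim_const.
    + rewrite Rmin_right, Hrow by lra.
      pose proof (AXBU_Tbar_neg (md k) r (Hmd k) Hr). lra.
Qed.

Lemma interval_bound x h : cl_solution n m A B U X Tbar t md x -> gauge h ->
  forall k c, 0 <= c -> (forall r, (r < n)%nat -> h (x (t k) r) <= c * X (md k) 0 r) ->
  forall s r, t k <= s <= t (S k) -> (r < n)%nat -> h (x s r) <= c * Xref k s r.
Proof.
  intros [Hxc Hxd] Hh k c Hc Hstart.
  destruct switching as (_ & Hmd & _ & Hinc & _).
  pose proof (switching_nonneg k).
  apply (comparison_principle n (t k) (t (S k)) x (Xref k)
           (fun s => cl_entry m A B U X (md k) (Rmin (s - t k) Tbar))); auto.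
  - intros s r Hs Hr. apply X_pos; [apply Hmd|assumption|apply clamp_range; lra].
  - intros r Hr s Hs e He.
    destruct (Hxc r Hr s ltac:(lra) e He) as [d [Hd Hnear]].
    exists d. split; [assumption|]. intros y Hy. apply Hnear. lra.
  - intros r Hr. apply (cont_on_clamp (fun tau => X (md k) tau r)); [lra|lra|].
    apply X_continuous; [apply Hmd|assumption].
  - intros s r c' Hs. apply cl_offdiag_nonneg. lra.
  - apply Xref_strict_supersolution.
  - intros r Hr. unfold Xref. rewrite Rminus_diag, Rmin_left by lra. apply Hstart, Hr.
Qed.

Lemma closed_loop_positive : cl_positive n m A B U X Tbar t md.
Proof.
  intros x Hx Hx0.
  destruct switching as (Ht0 & _ & _ & Hinc & Hunb & _).
  assert (Hinterval : forall k, (forall r, (r < n)%nat -> 0 <= x (t k) r) ->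
            forall s r, t k <= s <= t (S k) -> (r < n)%nat -> 0 <= x s r).
  { intros k Hk s r Hs Hr.
    pose proof (interval_bound x Ropp Hx gauge_Ropp k 0 (Rle_refl 0)
                  ltac:(intros q Hq; specialize (Hk q Hq); lra) s r Hs Hr). lra. }
  assert (Hswitch : forall k r, (r < n)%nat -> 0 <= x (t k) r).
  { induction k as [|k IH]; intros r Hr; [rewrite Ht0; auto|].
    apply (Hinterval k IH); [pose proof (Hinc k); lra|assumption]. }
  intros s Hs r Hr.
  destruct (switching_interval t Hinc Hunb s 0 ltac:(lra)) as [k [_ Hk]].
  exact (Hinterval k (Hswitch k) s r Hk Hr).
Qed.

Section Decay.

Variable Zm : R.
Hypothesis Zm_ge_eps : eps <= Zm.
Hypothesis X_le_Zm : forall i r, (i < N)%nat -> (r < n)%nat ->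
  forall tau, 0 <= tau <= Tbar -> X i tau r <= Zm.

Let rho := 1 - eps / Zm.

Lemma rho_range : 0 <= rho < 1.
Proof.
  unfold rho. assert (0 < eps / Zm) by (apply Rdiv_lt_0_compat; lra).
  assert (eps / Zm <= 1) by (apply Rmult_le_reg_r with Zm; [lra|]; field_simplify; lra).
  lra.
Qed.

Lemma X_switch_contracts k r : (r < n)%nat -> X (md k) Tbar r <= rho * X (md (S k)) 0 r.
Proof.
  intros Hr. destruct switching as (_ & Hmd & Hnsw & _).
  pose proof (X_switch (md (S k)) (md k) (Hmd (S k)) (Hmd k) (Hnsw k) r Hr).
  pose proof (X_le_Zm (md (S k)) r (Hmd (S k)) Hr 0 ltac:(lra)).
  assert (eps / Zm * X (md (S k)) 0 r <= eps).
  { apply Rmult_le_reg_r with Zm; [lra|]. field_simplify; [nra|lra]. }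
  unfold rho. lra.
Qed.

Lemma decay_at_switches x : cl_solution n m A B U X Tbar t md x ->
  forall k r, (r < n)%nat ->
    Rabs (x (t k) r) <= vnorm n (x 0) / eps * rho ^ k * X (md k) 0 r.
Proof.
  intros Hx. destruct switching as (Ht0 & _ & _ & Hinc & _ & Hdwell).
  pose proof rho_range as Hrho.
  assert (Hc0 : 0 <= vnorm n (x 0) / eps)
    by (apply Rmult_le_pos; [apply vnorm_ge0|left; apply Rinv_0_lt_compat; lra]).
  induction k as [|k IH]; intros r Hr.
  - rewrite Ht0, pow_O, Rmult_1_r.
    pose proof (Rabs_le_vnorm n (x 0) r Hr). pose proof (X_start_ge_eps 0 r Hr).
    apply Rle_trans with (vnorm n (x 0) / eps * eps).
    { replace (vnorm n (x 0) / eps * eps) with (vnorm n (x 0)) by (field; lra). assumption. }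
    apply Rmult_le_compat_l; assumption.
  - assert (Hck : 0 <= vnorm n (x 0) / eps * rho ^ k)
      by (apply Rmult_le_pos; [assumption|apply pow_le; lra]).
    pose proof (interval_bound x Rabs Hx gauge_Rabs k _ Hck IH (t (S k)) r
                  ltac:(pose proof (Hinc k); lra) Hr) as Hend.
    unfold Xref in Hend. rewrite Rmin_right in Hend by (specialize (Hdwell k); lra).
    pose proof (X_switch_contracts k r Hr).
    eapply Rle_trans; [exact Hend|]. rewrite <- tech_pow_Rmult.
    replace (vnorm n (x 0) / eps * (rho * rho ^ k) * X (md (S k)) 0 r)
      with (vnorm n (x 0) / eps * rho ^ k * (rho * X (md (S k)) 0 r)) by ring.
    apply Rmult_le_compat_l; assumption.
Qed.

Lemma decay_on_intervals x : cl_solution n m A B U X Tbar t md x ->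
  forall k s, t k <= s <= t (S k) ->
    vnorm n (x s) <= INR n * Zm / eps * vnorm n (x 0) * rho ^ k.
Proof.
  intros Hx k s Hs. destruct switching as (_ & Hmd & _).
  pose proof rho_range as Hrho.
  assert (Hck : 0 <= vnorm n (x 0) / eps * rho ^ k)
    by (apply Rmult_le_pos; [apply Rmult_le_pos; [apply vnorm_ge0|left; apply Rinv_0_lt_compat; lra]
                            |apply pow_le; lra]).
  replace (INR n * Zm / eps * vnorm n (x 0) * rho ^ k)
    with (INR n * (vnorm n (x 0) / eps * rho ^ k * Zm)) by (unfold Rdiv; ring).
  apply vnorm_le. intros r Hr.
  pose proof (interval_bound x Rabs Hx gauge_Rabs k _ Hck (decay_at_switches x Hx k) s r Hs Hr)
    as Hbound.
  eapply Rle_trans; [exact Hbound|]. apply Rmult_le_compat_l; [assumption|].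
  apply X_le_Zm; [apply Hmd|assumption|apply clamp_range; lra].
Qed.

End Decay.

Lemma closed_loop_GAS : cl_GAS n m A B U X Tbar t md.
Proof.
  destruct X_bounded as [Zm [HZm HXZm]].
  destruct switching as (Ht0 & _ & _ & Hinc & Hunb & _).
  apply (GAS_of_interval_decay n _ t (1 - eps / Zm) (INR n * Zm / eps)); auto.
  - apply rho_range. assumption.
  - apply Rmult_le_pos; [apply Rmult_le_pos; [apply pos_INR|lra]|left; apply Rinv_0_lt_compat; lra].
  - intros x Hx. apply decay_on_intervals; assumption.
Qed.

End ClosedLoop.

Theorem corollary5 (n m N : nat) (A B : nat -> nat -> nat -> R)
  (X dX : nat -> R -> nat -> R) (U : nat -> R -> nat -> nat -> R)
  (Tbar eps alpha : R) :
  0 < Tbar -> 0 < eps -> 0 < alpha ->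
  (forall i r, (i < N)%nat -> (r < n)%nat -> forall tau, 0 <= tau <= Tbar ->
     derivable_pt_lim (fun s => X i s r) tau (dX i tau r)) ->
  (forall i r, (i < N)%nat -> (r < n)%nat -> cont_on 0 Tbar (fun s => dX i s r)) ->
  (forall i r, (i < N)%nat -> (r < n)%nat -> forall tau, 0 <= tau <= Tbar ->
     X i tau r <> 0) ->
  (forall i r, (i < N)%nat -> (r < n)%nat -> 0 < X i Tbar r) ->
  (forall i l c, (i < N)%nat -> (l < m)%nat -> (c < n)%nat ->
     cont_on 0 Tbar (fun s => U i s l c)) ->
  (forall i, (i < N)%nat -> forall tau, 0 <= tau <= Tbar ->
     forall r c, (r < n)%nat -> (c < n)%nat ->
       0 <= A i r c * X i tau c + rsum m (fun l => B i r l * U i tau l c)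
            + (if Nat.eqb r c then alpha else 0)) ->
  (forall i r, (i < N)%nat -> (r < n)%nat ->
     rsum n (fun c => A i r c * X i Tbar c
                      + rsum m (fun l => B i r l * U i Tbar l c)) < 0) ->
  (forall i, (i < N)%nat -> forall tau, 0 <= tau <= Tbar ->
     forall r, (r < n)%nat ->
       rsum n (fun c => (if Nat.eqb r c then - dX i tau r else 0)
                        + A i r c * X i tau c
                        + rsum m (fun l => B i r l * U i tau l c)) < 0) ->
  (forall i j, (i < N)%nat -> (j < N)%nat -> i <> j ->
     forall r, (r < n)%nat -> X j Tbar r - X i 0 r + eps <= 0) ->
  forall (t : nat -> R) (md : nat -> nat), dwell_switching N Tbar t md ->
    cl_positive n m A B U X Tbar t md /\ cl_GAS n m A B U X Tbar t md.
Proof.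
  intros HT Heps _ HdX _ HXnz HXT _ Hmetz HTneg HdXneg Hsw t md Hdwell.
  split; [eapply closed_loop_positive | eapply closed_loop_GAS]; eassumption.
Qed.
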